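(* Let $d\ge2$ and let $R=(r_{ij})$ be a real $d\times d$ matrix with $r_{ii}=1$ for all $i$. Assume $R$ is not an $\mathcal S$-matrix, every principal sub-matrix of $R$ other than $R$ itself is completely-$\mathcal S$, and $\det R=0$. Then $R$ has rank $d-1$, there exists a column vector $U>0$ with $RU=0$, and there exists a row vector $a>0$ with $aR=0$.
   Context: $x>0$ (resp. $x\ge0$) means all entries positive (resp. non-negative). A square matrix $M$ is an $\mathcal S$-matrix if there exists a vector $x\ge0$ with $Mx>0$; it is completely-$\mathcal S$ if all its principal sub-matrices (sub-matrices $(m_{ij})_{i,j\in I}$ for non-empty index sets $I$, including the full set) are $\mathcal S$-matrices. *)

From mathcomp Require Import all_boot all_order all_algebra.
Set Implicit Arguments. Unset Strict Implicit. Unset Printing Implicit Defensive.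
Import Order.TTheory GRing.Theory Num.Theory.
Local Open Scope ring_scope.

Definition S_matrix (R : realFieldType) (n : nat) (M : 'M[R]_n) : Prop :=
  exists x : 'cV[R]_n, (forall i, 0 <= x i 0) /\ (forall i, 0 < (M *m x) i 0).

(* Principal submatrix of M on the index set I, indexed by 'I_#|I|
   (rows/columns listed in increasing order via enum_val). *)
Definition principal_submx (R : realFieldType) (n : nat) (I : {set 'I_n})
  (M : 'M[R]_n) : 'M[R]_#|I| :=
  \matrix_(i, j) M (enum_val i) (enum_val j).

Definition completely_S (R : realFieldType) (n : nat) (M : 'M[R]_n) : Prop :=
  forall I : {set 'I_n}, I != set0 -> S_matrix (principal_submx I M).

From mathcomp Require Import all_boot all_order all_algebra.
From mathcomp Require Import ring lra zify.
Import Order.TTheory GRing.Theory Num.Theory.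
Set Implicit Arguments. Unset Strict Implicit. Unset Printing Implicit Defensive.
Local Open Scope ring_scope.

(* By Ville's theorem of the alternative (proved below by Fourier-Motzkin
   elimination), a matrix fails to be an S-matrix exactly when some row vector
   y >= 0, y <> 0 has y M <= 0.  When M is not an S-matrix but all its proper
   principal submatrices are, such a y is positive, since its support would
   otherwise index a smaller principal submatrix that is not an S-matrix.  For the
   same reason every a with a M = 0 is a multiple of y: moving y along a until a
   coordinate vanishes produces another such certificate, which must then be 0.
   As det M = 0 there is such an a <> 0, whence y M = 0 and rank M = d - 1.
   Finally, transposition preserves complete S-ness and, by a similar shift
   argument, the failure of the S property for such minimal matrices, so the
   positive left null vector of M^T is the required right null vector of M. *)

Section Alternative.
Variable R : realFieldType.

Lemma exists_between (I : finType) (P N : {set I}) (l u : I -> R) (l0 : R) :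
  (forall q, q \in N -> l0 < u q) -> (forall p q, p \in P -> q \in N -> l p < u q) ->
  exists t, [/\ l0 < t, forall p, p \in P -> l p < t & forall q, q \in N -> t < u q].
Proof.
move=> l0u lu; set m := \big[Num.max/l0]_(p in P) l p.
set M := \big[Num.min/(m + 1)]_(q in N) u q.
have mM : m < M.
  apply: lt_bigmin => [|q qN]; first lra.
  by apply: bigmax_lt => [|p pP]; [exact: l0u | exact: lu].
have l0m : l0 <= m by apply: bigmax_ge_id.
exists ((m + M) / 2); split => [|p pP|q qN].
- lra.
- have lm : l p <= m by apply: le_bigmax_cond.
  lra.
- have Mu : M <= u q by apply: bigmin_le_cond.
  lra.
Qed.

Lemma min_ratio_test (I : finType) (L : {set I}) (y a : I -> R) i0 :
  (forall i, i \in L -> 0 < y i) -> i0 \in L -> a i0 < 0 ->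
  exists2 t, 0 < t & exists2 k, k \in L &
    y k + t * a k = 0 /\ forall i, i \in L -> 0 <= y i + t * a i.
Proof.
move=> ypos i0L ai0.
have i0P : i0 \in [pred i in L | a i < 0] by rewrite inE i0L ai0.
have [k /andP[kL ak] kmin] := arg_minP (fun i => y i / - a i) i0P.
have ak0 : 0 < - a k by rewrite oppr_gt0.
set t := y k / - a k.
exists t; first by rewrite divr_gt0 ?ypos.
exists k => //; split=> [|i iL]; first by rewrite /t; field; rewrite -oppr_eq0 gt_eqF.
have t0 : 0 < t by rewrite divr_gt0 ?ypos.
have yi := ypos i iL; have [ai0'|ai] := ltP (a i) 0; last by nra.
have iP : i \in [pred i in L | a i < 0] by rewrite inE iL ai0'.
have := kmin i iP; rewrite ler_pdivlMr ?oppr_gt0 // mulrN -/t.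
lra.
Qed.

Lemma sum_delta (I : finType) (J : {set I}) (F : I -> R) i0 :
  i0 \in J -> \sum_(i in J) (i == i0)%:R * F i = F i0.
Proof.
move=> i0J; rewrite (bigD1 i0) //= eqxx mul1r big1 ?addr0 // => i /andP[_ /negPf->].
exact: mul0r.
Qed.

Section FourierMotzkin.
Variables (T I : finType) (J : {set I}) (a : I -> T -> R) (k0 : T).

(* Elimination of the coordinate [k0]: the new family keeps the [a i] with
   [a i k0 <= 0] (those with [a i k0 < 0] are kept because solutions are sought
   nonnegative) and adds, for each pair [p], [q] with [a p k0 > 0 > a q k0], the
   nonnegative combination of [a p] and [a q] that vanishes at [k0]. *)

Definition fm_vec (j : I + I * I) : T -> R :=
  match j with
  | inl i => a i
  | inr (p, q) => fun k => a p k0 * a q k - a q k0 * a p k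
  end.

Definition fm_set : {set I + I * I} :=
  [set j | match j with
           | inl i => (i \in J) && (a i k0 <= 0)
           | inr (p, q) => [&& p \in J, q \in J, 0 < a p k0 & a q k0 < 0]
           end].

Definition fm_weight (j : I + I * I) (i : I) : R :=
  match j with
  | inl i' => (i == i')%:R
  | inr (p, q) => (i == p)%:R * - a q k0 + (i == q)%:R * a p k0
  end.

Lemma fm_vecE j k : j \in fm_set -> fm_vec j k = \sum_(i in J) fm_weight j i * a i k.
Proof.
rewrite inE; case: j => [i' /andP[i'J _] | [p q] /and4P[pJ qJ _ _]] /=.
  by rewrite sum_delta.
under eq_bigr do rewrite mulrDl ![_ * _ * a _ k]mulrAC.
by rewrite big_split /= -!mulr_suml !sum_delta //; ring.
Qed.

Lemma fm_weight_ge0 j i : j \in fm_set -> 0 <= fm_weight j i.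
Proof.
rewrite inE; case: j => [i' _ | [p q] /and4P[_ _ ap aq]] /=; first exact: ler0n.
by rewrite addr_ge0 ?mulr_ge0 ?ler0n ?oppr_ge0 ?ltW.
Qed.

Lemma fm_weight_gt0 j : j \in fm_set -> exists2 i, i \in J & 0 < fm_weight j i.
Proof.
rewrite inE; case: j => [i' /andP[i'J _] | [p q] /and4P[pJ _ ap aq]] /=.
  by exists i'; rewrite ?eqxx ?ltr01.
have pq : p != q by apply: contraTneq ap => ->; rewrite -leNgt ltW.
by exists p; rewrite // eqxx (negPf pq) mul1r mul0r addr0 oppr_gt0.
Qed.

Lemma fm_vec_k0 j : j \in fm_set -> fm_vec j k0 <= 0.
Proof. by rewrite inE; case: j => [i /andP[_ //] | [p q] _] /=; rewrite mulrC subrr. Qed.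

Lemma fm_dual (C : {set T}) (c : I + I * I -> R) :
  (forall j, 0 <= c j) -> (exists2 j, j \in fm_set & 0 < c j) ->
  (forall k, k \in C -> \sum_(j in fm_set) c j * fm_vec j k <= 0) ->
  exists c' : I -> R, [/\ forall i, 0 <= c' i, exists2 i, i \in J & 0 < c' i &
    forall k, k \in k0 |: C -> \sum_(i in J) c' i * a i k <= 0].
Proof.
move=> c0 [j0 j0F cj0] cC.
pose c' i := \sum_(j in fm_set) c j * fm_weight j i.
have c'E k : \sum_(i in J) c' i * a i k = \sum_(j in fm_set) c j * fm_vec j k.
  under eq_bigr do rewrite mulr_suml.
  rewrite exchange_big; apply: eq_bigr => j jF.
  by rewrite fm_vecE // mulr_sumr; apply: eq_bigr => i _; rewrite mulrA.
have cw_ge0 j i : j \in fm_set -> 0 <= c j * fm_weight j i.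
  by move=> jF; rewrite mulr_ge0 ?fm_weight_ge0.
exists c'; split => [i | | k].
- by apply: sumr_ge0 => j; apply: cw_ge0.
- have [i iJ wi] := fm_weight_gt0 j0F; exists i => //.
  rewrite /c' (bigD1 j0) //=; apply: ltr_wpDr; last exact: mulr_gt0.
  by apply: sumr_ge0 => j /andP[jF _]; apply: cw_ge0.
- rewrite in_setU1 c'E => /predU1P [-> | /cC //].
  by apply: sumr_le0 => j jF; rewrite mulr_ge0_le0 ?fm_vec_k0.
Qed.

Lemma fm_primal (C : {set T}) (x : T -> R) : k0 \notin C -> (forall k, 0 <= x k) ->
  (forall j, j \in fm_set -> 0 < \sum_(k in C) fm_vec j k * x k) ->
  exists x' : T -> R, (forall k, 0 <= x' k) /\
    forall i, i \in J -> 0 < \sum_(k in k0 |: C) a i k * x' k.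
Proof.
move=> k0C x0 xF; pose s i := \sum_(k in C) a i k * x k.
have s_gt0 i : i \in J -> a i k0 <= 0 -> 0 < s i.
  by move=> iJ ai; apply: (xF (inl i)); rewrite inE iJ.
have s_lt p q : p \in J -> q \in J -> 0 < a p k0 -> a q k0 < 0 ->
    a q k0 * s p < a p k0 * s q.
  move=> pJ qJ ap aq; have := xF (inr (p, q)); rewrite inE pJ qJ ap aq => /(_ isT).
  have -> : \sum_(k in C) fm_vec (inr (p, q)) k * x k = a p k0 * s q - a q k0 * s p.
    by rewrite /s !mulr_sumr -sumrB; apply: eq_bigr => k _ /=; ring.
  by rewrite subr_gt0.
pose l p := - s p / a p k0; pose u q := s q / - a q k0.
have [t [t0 lt tu]] : exists t, [/\ 0 < t,
    forall p, p \in [set p in J | 0 < a p k0] -> l p < t &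
    forall q, q \in [set q in J | a q k0 < 0] -> t < u q].
  apply: exists_between => [q | p q]; rewrite !inE.
    by case/andP => qJ aq; rewrite divr_gt0 ?oppr_gt0 ?s_gt0 ?ltW.
  case/andP => pJ ap /andP[qJ aq].
  rewrite /l /u ltr_pdivrMr // mulrAC ltr_pdivlMr ?oppr_gt0 //.
  have := s_lt p q pJ qJ ap aq; lra.
exists (fun k => if k == k0 then t else x k); split => [k | i iJ].
  by case: ifP => _ //; exact: ltW.
rewrite big_setU1 //= eqxx (eq_bigr (fun k => a i k * x k)) -/(s i); last first.
  by move=> k kC; rewrite ifN //; apply: contraNneq k0C => <-.
case: (ltrgt0P (a i k0)) => ai.
- have := lt i; rewrite inE iJ ai /l ltr_pdivrMr // => /(_ isT); lra.
- have := tu i; rewrite inE iJ ai /u ltr_pdivlMr ?oppr_gt0 // => /(_ isT).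
  have := s_gt0 i iJ (ltW ai); lra.
- by rewrite ai mul0r add0r s_gt0 // ai.
Qed.

End FourierMotzkin.

Theorem ville (T : finType) (C : {set T}) (I : finType) (J : {set I}) (a : I -> T -> R) :
  (exists x : T -> R, (forall k, 0 <= x k) /\
     forall i, i \in J -> 0 < \sum_(k in C) a i k * x k) \/
  (exists c : I -> R, [/\ forall i, 0 <= c i, exists2 i, i \in J & 0 < c i &
     forall k, k \in C -> \sum_(i in J) c i * a i k <= 0]).
Proof.
move: {2}#|C| (erefl #|C|) => n; elim: n C I J a => [|n IH] C I J a.
  move/cards0_eq ->; case: (set_0Vmem J) => [-> | [i iJ]].
    by left; exists (fun _ => 0); split => // i; rewrite inE.
  right; exists (fun _ => 1); split => [j | | k]; first exact: ler01.
    by exists i.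
  by rewrite inE.
move=> HC; have [k0 k0C] : exists k0, k0 \in C by apply/card_gt0P; rewrite HC.
have HC' : #|C :\ k0| = n by move: HC; rewrite (cardsD1 k0) k0C => -[].
rewrite -(setD1K k0C).
case: (IH _ _ (fm_set J a k0) (fm_vec a k0) HC') => [[x [x0 xF]] | [c [c0 cF cC]]].
  by left; apply: (fm_primal _ x0 xF); rewrite setD11.
by right; apply: fm_dual cF cC.
Qed.

Section SOn.
Variable d : nat.
Implicit Types (A : 'M[R]_d) (K L : {set 'I_d}).

(* [S_on A K]: the principal submatrix of [A] on [K] is an S-matrix, phrased
   with vectors indexed by ['I_d] and supported on [K].  An obstruction is the
   corresponding certificate of Ville's theorem. *)
Definition S_on A K : Prop :=
  exists x : 'cV[R]_d, [/\ forall k, 0 <= x k 0, forall k, k \notin K -> x k 0 = 0 &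
    forall i, i \in K -> 0 < (A *m x) i 0].

Definition obstruction A K (y : 'rV[R]_d) : Prop :=
  [/\ forall i, 0 <= y 0 i, forall i, i \notin K -> y 0 i = 0 &
    forall j, j \in K -> (y *m A) 0 j <= 0].

Lemma S_on0 A : S_on A set0.
Proof. by exists 0; split => [k | k _ | i]; rewrite ?mxE ?inE. Qed.

Lemma S_on_principal A K : S_matrix (principal_submx K A) -> S_on A K.
Proof.
case: (set_0Vmem K) => [-> _ | [j0 j0K] [x [x0 Ax]]]; first exact: S_on0.
pose r := enum_rank_in j0K.
exists (\col_k (if k \in K then x (r k) 0 else 0)); split => [k | k kK | i iK].
- by rewrite mxE; case: ifP.
- by rewrite mxE (negPf kK).
have -> : (A *m \col_k (if k \in K then x (r k) 0 else 0)) i 0 =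
    \sum_(k in K) A i k * x (r k) 0.
  rewrite mxE [RHS]big_mkcond; apply: eq_bigr => k _.
  by rewrite mxE; case: ifP; rewrite ?mulr0.
rewrite (big_enum_val (op := +%R) (idx := 0)); congr (0 < _): (Ax (r i)); rewrite mxE.
by apply: eq_bigr => k _; rewrite !mxE /r enum_rankK_in // enum_valK_in.
Qed.

Lemma S_matrix_of_S_on A : S_on A setT -> S_matrix A.
Proof. by case=> x [x0 _ Ax]; exists x; split => // i; apply: Ax; rewrite inE. Qed.

Lemma completely_S_S_matrix A : completely_S A -> S_matrix A.
Proof.
move=> AcS; apply: S_matrix_of_S_on; case: (set_0Vmem [set: 'I_d]) => [-> | [i _]].
  exact: S_on0.
by apply/S_on_principal/AcS/set0Pn; exists i.
Qed.

Lemma S_on_obstruction_eq0 A K y : S_on A K -> obstruction A K y -> y = 0.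
Proof.
case=> x [x0 xK Ax] [y0 yK yA].
have yAx_le0 : (y *m A *m x) 0 0 <= 0.
  rewrite mxE; apply: sumr_le0 => j _.
  by case: (boolP (j \in K)) => jK; [rewrite mulr_le0_ge0 ?yA ?x0 | rewrite xK ?mulr0].
have yAx_ge0 i : 0 <= y 0 i * (A *m x) i 0.
  by case: (boolP (i \in K)) => iK; [rewrite mulr_ge0 ?y0 ?ltW ?Ax | rewrite yK ?mul0r].
have yAx0 : \sum_i y 0 i * (A *m x) i 0 = 0.
  by apply/eqP; rewrite eq_le sumr_ge0 // andbT; move: yAx_le0; rewrite -mulmxA mxE.
apply/rowP => i; rewrite mxE; case: (boolP (i \in K)) => iK; last exact: yK.
have /eqP := psumr_eq0P (fun i _ => yAx_ge0 i) yAx0 (i := i) isT.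
by rewrite mulf_eq0 (gt_eqF (Ax i iK)) orbF => /eqP.
Qed.

Lemma S_on_or_obstruction A K : S_on A K \/ exists2 y, obstruction A K y & y != 0.
Proof.
case: (ville K K (fun i k => A i k)) => [[x [x0 Ax]] | [c [c0 [i iK ci] cA]]].
  left; exists (\col_k (if k \in K then x k else 0)); split => [k | k kK | i iK].
  - by rewrite mxE; case: ifP.
  - by rewrite mxE (negPf kK).
  rewrite mxE; congr (0 < _): (Ax i iK); rewrite big_mkcond.
  by apply: eq_bigr => k _; rewrite mxE; case: ifP; rewrite ?mulr0.
right; exists (\row_i (if i \in K then c i else 0)); first split => [j | j jK | j jK].
- by rewrite mxE; case: ifP.
- by rewrite mxE (negPf jK).
- rewrite mxE; congr (_ <= 0): (cA j jK); rewrite big_mkcond.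
  by apply: eq_bigr => k _; rewrite mxE; case: ifP; rewrite ?mul0r.
by apply: contraTneq ci => /rowP/(_ i); rewrite !mxE iK => ->; rewrite ltxx.
Qed.

Lemma minimal_obstruction_eq0 A K y k :
  (forall L, L \proper K -> S_on A L) -> obstruction A K y ->
  k \in K -> y 0 k = 0 -> y = 0.
Proof.
move=> minK [y0 yK yA] kK yk; pose L := [set i | y 0 i != 0].
have LK : L \subset K.
  by apply/subsetP => i; rewrite inE; apply: contraR => /yK ->.
apply: (S_on_obstruction_eq0 (minK L _)).
  by apply/properP; split => //; exists k; rewrite // inE yk eqxx.
split => // [i | j /(subsetP LK)]; last exact: yA.
by rewrite inE negbK => /eqP.
Qed.

Lemma minimal_obstruction_gt0 A K y :
  (forall L, L \proper K -> S_on A L) -> obstruction A K y -> y != 0 ->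
  forall i, i \in K -> 0 < y 0 i.
Proof.
move=> minK yobs yn0 i iK; have [y0 _ _] := yobs.
rewrite lt0r y0 andbT; apply: contra yn0 => /eqP yi0.
by rewrite (minimal_obstruction_eq0 minK yobs iK yi0).
Qed.

(* Subtracting from a positive obstruction [y] the largest multiple of [x^T]
   that keeps it nonnegative leaves an obstruction with a smaller support. *)
Lemma S_on_of_tr A K : (forall L, L \proper K -> S_on A L) -> S_on A^T K -> S_on A K.
Proof.
move=> minK [x [x0 xK Ax]].
case: (S_on_or_obstruction A K) => // -[y yobs yn0]; have [y0 yK yA] := yobs.
have ypos := minimal_obstruction_gt0 minK yobs yn0.
have [k kK] : exists k, k \in K.
  by have [k yk] := rV0Pn _ yn0; exists k; apply: contraR yk => /yK ->.
have [i0 xi0] : exists i0, x i0 0 != 0.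
  by apply/cV0Pn; apply: contraTneq (Ax k kK) => ->; rewrite mulmx0 mxE ltxx.
have i0K : i0 \in K by apply: contraR xi0 => /xK ->.
have nxi0 : - x i0 0 < 0 by rewrite oppr_lt0 lt0r xi0 x0.
have [t t0 [k' k'K [zk' z_ge0]]] :=
  min_ratio_test (y := fun i => y 0 i) (a := fun i => - x i 0) ypos i0K nxi0.
pose z := y - t *: x^T.
have zE i : z 0 i = y 0 i + t * - x i 0 by rewrite !mxE mulrN.
have z_supp i : i \notin K -> z 0 i = 0.
  by move=> iK; rewrite zE yK ?xK ?oppr0 ?mulr0 ?addr0.
have zA j : j \in K -> (z *m A) 0 j < 0.
  move=> jK; rewrite mulmxBl -scalemxAl -[X in x^T *m X]trmxK -trmx_mul.
  have := yA j jK; have := mulr_gt0 t0 (Ax j jK).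
  set yA' := y *m A; set Ax' := A^T *m x; rewrite !mxE; lra.
have z0 : z = 0.
  apply: (minimal_obstruction_eq0 minK _ k'K); last by rewrite zE.
  split => [i | | j /zA /ltW //]; last exact: z_supp.
  by case: (boolP (i \in K)) => iK; [rewrite zE; exact: z_ge0 | rewrite z_supp].
by have := zA k kK; rewrite z0 mul0mx mxE ltxx.
Qed.

Lemma completely_S_on_tr A K : (forall L, L \subset K -> S_on A L) -> S_on A^T K.
Proof.
have [n] := ubnP #|K|; elim: n K => // n IH K /ltnSE HK AK.
apply: S_on_of_tr => [L LK | ]; last by rewrite trmxK; exact: AK.
apply: IH => [|L' L'L]; first exact: leq_trans (proper_card LK) HK.
exact/AK/(subset_trans L'L)/proper_sub.
Qed.

Lemma proper_S_on_tr A : (forall K, K \proper setT -> S_on A K) ->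
  forall K, K \proper setT -> S_on A^T K.
Proof.
move=> A_min K KT; apply: completely_S_on_tr => L LK.
exact/A_min/(sub_proper_trans LK).
Qed.

Section MinimalNonS.
Variable A : 'M[R]_d.
Hypothesis A_min : forall K, K \proper setT -> S_on A K.
Hypothesis A_nonS : ~ S_on A setT.

Lemma minimal_nonS_obstruction :
  exists2 y : 'rV[R]_d, forall i, 0 < y 0 i & forall j, (y *m A) 0 j <= 0.
Proof.
case: (S_on_or_obstruction A setT) => // -[y yobs yn0]; have [_ _ yA] := yobs.
exists y => [i | j]; last exact: yA.
exact: minimal_obstruction_gt0 A_min yobs yn0 i (in_setT i).
Qed.

Lemma minimal_nonS_kernel (y a : 'rV[R]_d) :
  (forall i, 0 < y 0 i) -> (forall j, (y *m A) 0 j <= 0) -> a *m A = 0 -> (a <= y)%MS.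
Proof.
move=> ypos yA; wlog [i0 ai0] : a / exists i, a 0 i < 0.
  move=> neg aA; have [-> | /rV0Pn [i ai]] := eqVneq a 0; first exact: sub0mx.
  have [ai_neg | ai_ge0] := ltP (a 0 i) 0; first by apply: neg => //; exists i.
  rewrite -(eqmx_opp a); apply: neg; last by rewrite mulNmx aA oppr0.
  by exists i; rewrite mxE oppr_lt0 lt0r ai.
move=> aA; have [t t0 [k _ [zk z_ge0]]] := min_ratio_test (L := setT)
  (y := fun i => y 0 i) (a := fun i => a 0 i) (fun i _ => ypos i) (in_setT i0) ai0.
have z0 : y + t *: a = 0.
  apply: (minimal_obstruction_eq0 A_min _ (in_setT k)); last by rewrite !mxE.
  split => [i | i | j _]; last by rewrite mulmxDl -scalemxAl aA scaler0 addr0.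
    by rewrite !mxE; apply: z_ge0; rewrite inE.
  by rewrite inE.
have -> : y = - (t *: a) by apply/eqP; rewrite -addr_eq0 z0.
apply/sub_rVP; exists (- t^-1).
by rewrite scalerN scaleNr opprK scalerA mulVf ?scale1r // gt_eqF.
Qed.

Hypothesis A_det0 : \det A = 0.

Lemma minimal_nonS_rank : \rank A = d.-1.
Proof.
have [y ypos yA] := minimal_nonS_obstruction.
have kerA : (kermx A <= y)%MS.
  apply/row_subP => i; apply: minimal_nonS_kernel ypos yA _.
  by rewrite -row_mul mulmx_ker row0.
have := mxrankS kerA; rewrite mxrank_ker; have := rank_leq_row y; have := rank_leq_row A.
have : \rank A != d.
  by rewrite -[_ == _]/(row_free A) row_free_unit unitmxE A_det0 unitr0.
lia.
Qed.

Lemma minimal_nonS_left_kernel : exists2 y : 'rV[R]_d, forall i, 0 < y 0 i & y *m A = 0.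
Proof.
have [y ypos yA] := minimal_nonS_obstruction; exists y => //.
have /det0P [a an0 aA] : \det A == 0 by rewrite A_det0.
have /sub_rVP [c ac] := minimal_nonS_kernel ypos yA aA.
apply/eqP; move/eqP: aA; rewrite ac -scalemxAl scaler_eq0 => /orP [/eqP c0 | //].
by move: an0; rewrite ac c0 scale0r eqxx.
Qed.

End MinimalNonS.

End SOn.

End Alternative.

Theorem lemma2 (R : realFieldType) (d : nat) (Hd : (2 <= d)%N) (M : 'M[R]_d)
  (Hdiag : forall i, M i i = 1)
  (HnotS : ~ S_matrix M)
  (Hsub : forall I : {set 'I_d}, I != set0 -> I != setT ->
            completely_S (principal_submx I M))
  (Hdet : \det M = 0) :
  \rank M = d.-1 /\
  (exists U : 'cV[R]_d, (forall i, 0 < U i 0) /\ M *m U = 0) /\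
  (exists a : 'rV[R]_d, (forall j, 0 < a 0 j) /\ a *m M = 0).
Proof.
have M_min : forall K : {set 'I_d}, K \proper setT -> S_on M K.
  move=> K; rewrite properT => KT; case: (set_0Vmem K) => [-> | [i iK]].
    exact: S_on0.
  by apply/S_on_principal/completely_S_S_matrix/Hsub => //; apply/set0Pn; exists i.
have M_nonS : ~ S_on M setT by move/S_matrix_of_S_on.
have Mt_nonS : ~ S_on M^T setT by move/(S_on_of_tr M_min).
split; first exact: minimal_nonS_rank M_min M_nonS Hdet.
split; last first.
  by have [a apos aM] := minimal_nonS_left_kernel M_min M_nonS Hdet; exists a.
have Mt_det0 : \det M^T = 0 by rewrite det_tr.
have [u upos uMt] := minimal_nonS_left_kernel (proper_S_on_tr M_min) Mt_nonS Mt_det0.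
exists u^T; split => [i | ]; first by rewrite mxE.
by rewrite -[M]trmxK -trmx_mul uMt trmx0.
Qed.
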